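(* Let $d > 3$ be odd. In the coefficient-choosing game of degree $d$ over $\mathbb{Z}/16\mathbb{Z}$, whichever player makes the last move has a winning strategy.
   Context: The coefficient-choosing game of degree $d$ over $R = \mathbb{Z}/16\mathbb{Z}$: Nora and Wanda alternately choose coefficients of $f(x) = a_d x^d + \cdots + a_0$; on each move the current player picks a not-yet-chosen coefficient and assigns it a value in $R$, subject to $a_d \neq 0$, $a_0 \neq 0$. After all $d+1$ coefficients are chosen, Wanda wins if $f$ has a root in $R$, and Nora wins otherwise. Who moves first is fixed in advance, which determines who makes the last move. *)

From mathcomp Require Import all_boot all_order all_algebra.
Set Implicit Arguments. Unset Strict Implicit. Unset Printing Implicit Defensive.
Import GRing.Theory.
Local Open Scope ring_scope.

Definition R16 := 'Z_16.

Inductive player := Nora | Wanda.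
Definition other (p : player) : player :=
  match p with Nora => Wanda | Wanda => Nora end.
Definition player_eqb (p q : player) : bool :=
  match p, q with Nora, Nora | Wanda, Wanda => true | _, _ => false end.

(* A position: coefficient a_i (i = 0..d) is either chosen (Some v) or not (None). *)
Definition position (d : nat) := {ffun 'I_d.+1 -> option R16}.

Definition empty_position (d : nat) : position d := [ffun _ => None].

Definition legal_move d (s : position d) (i : 'I_d.+1) (v : R16) : bool :=
  (s i == None) && (((i : nat) == 0%N) || ((i : nat) == d) ==> (v != 0)).

Definition play_move d (s : position d) (i : 'I_d.+1) (v : R16) : position d :=
  [ffun j => if j == i then Some v else s j].

Definition poly_of d (s : position d) : {poly R16} :=
  \poly_(i < d.+1) odflt 0 (s (inord i)).

Definition has_root_in_R (p : {poly R16}) : bool := [exists x : R16, root p x].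

Definition outcome d (P : player) (s : position d) : bool :=
  if player_eqb P Wanda then has_root_in_R (poly_of s)
  else ~~ has_root_in_R (poly_of s).

(* wins d P n mover s : player P has a winning strategy from position s
   with n moves remaining, when it is [mover]'s turn. *)
Fixpoint wins d (P : player) (n : nat) (mover : player) (s : position d) : bool :=
  match n with
  | 0%N => outcome P s
  | n'.+1 =>
    if player_eqb mover P then
      [exists i : 'I_d.+1, exists v : R16,
         legal_move s i v && wins P n' (other mover) (play_move s i v)]
    else
      [forall i : 'I_d.+1, forall v : R16,
         legal_move s i v ==> wins P n' (other mover) (play_move s i v)]
  end.

Definition has_winning_strategy d (P first : player) : bool :=
  wins P d.+1 first (empty_position d).

Definition last_mover (d : nat) (first : player) : player :=
  if odd d.+1 then first else other first.

From mathcomp Require Import all_boot all_order all_algebra.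
From mathcomp Require Import zify.
Set Implicit Arguments. Unset Strict Implicit. Unset Printing Implicit Defensive.
Import GRing.Theory.
Local Open Scope ring_scope.

(* Since d is odd there are d+1 = 2k moves, so the last mover is the second
   player and it suffices to answer each opponent move so as to keep an
   invariant.

   Wanda, moving last, fills a_0 and a_d with nonzero values while there is
   time; her final move is then on a middle coefficient, which she chooses so
   that f(1) = 0.

   Nora, moving last, uses two facts about Z/16.  For odd x, f(x) = f(1) mod 2,
   so a final move making f(1) odd rules out odd roots.  For even x, x^4 = 0
   and (x^2, x^3) is (0, 0) or (4, 8), so f(x) is a_0 or a_0 + 4 a_2 + 8 a_3
   when a_1 = 0.  In her first two moves Nora therefore either makes a_0 odd
   (so that f(x) is odd for even x),
   or answers a_0 <> 0 with a_1 = 0 and then picks a_2 or a_3 so that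
   a_0 + 4 a_2 + 8 a_3 <> 0; d > 3 leaves enough moves and keeps a_1, a_2, a_3
   away from the leading coefficient. *)

Section SecondPlayer.
Variable d : nat.
Implicit Types (s : position d) (W : nat -> position d -> Prop).

Definition moves_into W k s : Prop :=
  exists i v, legal_move s i v /\ W k (play_move s i v).

Lemma wins_second_player (P : player) W :
  (forall s, W 0%N s -> outcome P s) ->
  (forall k s i v, W k.+1 s -> legal_move s i v -> moves_into W k (play_move s i v)) ->
  forall k s, W k s -> wins P k.*2 (other P) s.
Proof.
move=> W0 W_reply; elim=> [|k IHk] s Ws; first exact: W0.
have opp_P : player_eqb (other P) P = false by case: (P).
have eq_P : player_eqb P P by case: (P).
have otherK : other (other P) = P by case: (P).
rewrite doubleS /= opp_P; apply/forallP => i; apply/forallP => v; apply/implyP => siv.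
have [j [w [sjw Wk]]] := W_reply _ _ _ _ Ws siv.
by rewrite otherK eq_P; apply/existsP; exists j; apply/existsP; exists w; rewrite sjw IHk.
Qed.

End SecondPlayer.

Definition odd16 (x : R16) : bool := odd (val x).

Lemma odd16D x y : odd16 (x + y) = odd16 x (+) odd16 y.
Proof. by rewrite /odd16 /= odd_mod // oddD. Qed.

Lemma odd16M x y : odd16 (x * y) = odd16 x && odd16 y.
Proof. by rewrite /odd16 /= odd_mod // oddM. Qed.

Lemma odd16X x i : odd16 (x ^+ i) = (i == 0)%N || odd16 x.
Proof.
elim: i => [|i IHi]; first by rewrite expr0.
by rewrite exprS odd16M IHi; case: (odd16 x); case: i {IHi}.
Qed.

Lemma odd16_horner (p : {poly R16}) x : odd16 p.[x] = odd16 p.[(odd16 x)%:R].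
Proof.
have odd16_0 : odd16 0 = false by [].
rewrite !horner_coef !(big_morph odd16 odd16D odd16_0); apply: eq_bigr => i _.
by rewrite !odd16M !odd16X; case: (odd16 x).
Qed.

Lemma odd16_horner_odd (p : {poly R16}) x : odd16 x -> odd16 p.[x] = odd16 p.[1].
Proof. by move=> x_odd; rewrite odd16_horner x_odd. Qed.

Lemma odd16_horner_even (p : {poly R16}) x : ~~ odd16 x -> odd16 p.[x] = odd16 p`_0.
Proof. by move/negbTE=> x_even; rewrite odd16_horner x_even -horner_coef0. Qed.

Lemma even_powers_Z16 x : ~~ odd16 x ->
  x ^+ 4 = 0 /\ (x ^+ 2 = 0 /\ x ^+ 3 = 0 \/ x ^+ 2 = 4 /\ x ^+ 3 = 8).
Proof.
case: x => m; do 16?case: m => [|m] //; move=> ? _;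
  do ![split | by left; split; apply/eqP | by right; split; apply/eqP | apply/eqP].
Qed.

Lemma horner_even_Z16 (p : {poly R16}) x : ~~ odd16 x ->
  p.[x] = p`_0 + p`_1 * x + p`_2 * x ^+ 2 + p`_3 * x ^+ 3.
Proof.
case/even_powers_Z16=> x4 _.
rewrite -{1}(poly_take_drop 4 p) hornerD hornerM hornerXn x4 mulr0 addr0.
by rewrite horner_poly !big_ord_recr big_ord0 /= add0r expr0 mulr1 expr1.
Qed.

Lemma horner_even_coef1_eq0_Z16 (p : {poly R16}) x : ~~ odd16 x -> p`_1 = 0 ->
  p.[x] = p`_0 \/ p.[x] = p`_0 + 4 * p`_2 + 8 * p`_3.
Proof.
move=> x_even p1; rewrite horner_even_Z16 // p1 mul0r addr0.
case: (even_powers_Z16 x_even) => _ [[-> ->]|[-> ->]].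
  by left; rewrite !mulr0 !addr0.
by right; rewrite [_ * 4]mulrC [_ * 8]mulrC.
Qed.

Lemma mul8_Z16 (x : R16) : 8 * x = 0 \/ 8 * x = 8.
Proof.
case: x => m; do 16?case: m => [|m] //; move=> ?.
all: first [by left; apply/eqP | by right; apply/eqP].
Qed.

Lemma addr_mul8_neq0_Z16 (b : R16) : b + 8 * (b == 0)%:R != 0 :> R16.
Proof. by have [->|b_neq0] := eqVneq b 0; rewrite //= mulr0 addr0. Qed.

Lemma mul4_mul8_neq0_Z16 (a0 a3 : R16) :
  a0 != 0 -> a0 + 4 * (a0 == 8)%:R + 8 * a3 != 0 :> R16.
Proof.
move=> a0_neq0; have [->|a0_neq8] := eqVneq a0 8; first by case: (mul8_Z16 a3) => ->.
rewrite /= mulr0 addr0; case: (mul8_Z16 a3) => ->; rewrite ?addr0 //.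
by rewrite addr_eq0; exact: a0_neq8.
Qed.

Section Positions.
Variable d : nat.
Implicit Types (s t : position d) (P : pred 'I_d.+1).

Definition is_end : pred 'I_d.+1 := fun i => ((i : nat) == 0%N) || ((i : nat) == d).

Definition nfree P s := #|[pred i | P i & s i == None]|.

Lemma nfree_play P s j v : s j = None -> nfree P s = (nfree P (play_move s j v) + P j)%N.
Proof.
move=> sj; rewrite /nfree (cardD1 j) inE sj eqxx andbT addnC; congr (_ + _)%N.
apply: eq_card => i; rewrite !inE ffunE.
by case: (altP (i =P j)) => [->|]; rewrite ?andbF.
Qed.

Lemma nfree_play_all s j v n :
  s j = None -> nfree predT s = n.+1 -> nfree predT (play_move s j v) = n.
Proof. by move=> sj; rewrite (nfree_play _ v sj) addn1 => -[]. Qed.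

Lemma nfree_gt0 P s : (0 < nfree P s)%N -> exists2 j, P j & s j = None.
Proof. by case/card_gt0P=> j /andP[Pj /eqP sj]; exists j. Qed.

Lemma nfree_eq0 P s j : nfree P s = 0%N -> s j = None -> ~~ P j.
Proof. by move=> P0 sj; move: (card0_eq P0 j); rewrite !inE sj eqxx andbT => ->. Qed.

Lemma nfree_empty P : nfree P (empty_position d) = #|P|.
Proof. by apply: eq_card => i; rewrite !inE ffunE andbT. Qed.

Lemma card_is_end : (#|is_end| <= 2)%N.
Proof.
by rewrite (@eq_card _ _ (pred2 ord0 ord_max)) ?card2 ?ltnS ?leq_b1.
Qed.

Lemma legal_move_free s i v : legal_move s i v -> s i = None.
Proof. by case/andP=> /eqP. Qed.

Lemma legal_move_end s i v : legal_move s i v -> is_end i -> v != 0.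
Proof. by case/andP=> _ /implyP. Qed.

Lemma legal_move_inner s i v : s i = None -> ~~ is_end i -> legal_move s i v.
Proof. by move=> si /negbTE i_inner; rewrite /legal_move si eqxx -/(is_end i) i_inner. Qed.

Lemma legal_move_neq0 s i v : s i = None -> v != 0 -> legal_move s i v.
Proof. by move=> si v_neq0; rewrite /legal_move si eqxx v_neq0 implybT. Qed.

Lemma play_move_same s j v : play_move s j v j = Some v.
Proof. by rewrite ffunE eqxx. Qed.

Lemma play_move_other s j v i : i != j -> play_move s j v i = s i.
Proof. by move/negbTE=> nij; rewrite ffunE nij. Qed.

Lemma coef_poly_of s k : (k <= d)%N -> (poly_of s)`_k = odflt 0 (s (inord k)).
Proof. by rewrite coef_poly ltnS => ->. Qed.

Lemma poly_of_play s j v : s j = None -> poly_of (play_move s j v) = poly_of s + v *: 'X^j.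
Proof.
move=> sj; apply/polyP => k; rewrite coefD coefZ coefXn !coef_poly.
case: ltnP => [k_le_d|d_lt_k]; last first.
  by rewrite add0r (gtn_eqF (leq_trans (ltn_ord j) d_lt_k)) mulr0.
rewrite ffunE -val_eqE /= inordK //.
by case: eqP => [->|_]; rewrite mulr_natr /= ?mulr1n ?mulr0n ?addr0 // inord_val sj add0r.
Qed.

Lemma horner1_play s j v : s j = None -> (poly_of (play_move s j v)).[1] = (poly_of s).[1] + v.
Proof. by move/poly_of_play->; rewrite hornerD hornerZ hornerXn expr1n mulr1. Qed.

Definition extends s t : Prop := forall i a, s i = Some a -> t i = Some a.

Lemma extends_play s j v : s j = None -> extends s (play_move s j v).
Proof. by move=> sj i a si; rewrite ffunE; case: eqP => // eij; rewrite eij sj in si. Qed.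

(* Quantifying over all extensions makes this stable under further moves. *)
Definition even_roots_blocked s : Prop :=
  forall t, extends s t -> forall x, ~~ odd16 x -> ~~ root (poly_of t) x.

Lemma even_roots_blocked_play s j v :
  s j = None -> even_roots_blocked s -> even_roots_blocked (play_move s j v).
Proof. by move=> sj s_blocked t st; apply: s_blocked => i a /(extends_play v sj)/st. Qed.

Lemma no_root_of_even_roots_blocked s :
  even_roots_blocked s -> odd16 (poly_of s).[1] -> ~~ has_root_in_R (poly_of s).
Proof.
move=> s_blocked f1_odd; apply/existsP => -[x /[dup] x_root /eqP fx0].
have [x_odd | x_even] := boolP (odd16 x).
  by move: f1_odd; rewrite -(odd16_horner_odd _ x_odd) fx0.
by move: x_root; apply/negP/s_blocked.
Qed.

End Positions.

Section WandaStrategy.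
Variable d : nat.
Implicit Types (s : position d).

Definition wanda_inv k s : Prop :=
  [/\ nfree predT s = k.*2, (nfree (@is_end d) s <= k.-1)%N
    & k = 0%N -> has_root_in_R (poly_of s)].

Lemma wanda_inv_outcome s : wanda_inv 0 s -> outcome Wanda s.
Proof. by case=> _ _ /(_ erefl). Qed.

Lemma wanda_reply k s i v : wanda_inv k.+1 s -> legal_move s i v ->
  moves_into wanda_inv k (play_move s i v).
Proof.
case=> [s_free s_ends _] siv; have si := legal_move_free siv.
set s' := play_move s i v.
have s'_free : nfree predT s' = k.*2.+1.
  by apply: nfree_play_all si _; rewrite s_free doubleS.
have s'_ends : (nfree (@is_end d) s' <= k)%N.
  by move: s_ends; rewrite (nfree_play _ v si) -/s'; lia.
have [ends0 | ends_gt0] := posnP (nfree (@is_end d) s').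
- have [j _ s'j] : exists2 j, predT j & s' j = None by apply: nfree_gt0; rewrite s'_free.
  exists j, (- (poly_of s').[1]); split; first exact: legal_move_inner s'j (nfree_eq0 ends0 s'j).
  split.
  + exact: nfree_play_all s'j s'_free.
  + by move: ends0; rewrite (nfree_play _ (- (poly_of s').[1]) s'j); lia.
  + by move=> _; apply/existsP; exists 1; rewrite /root horner1_play // addrN.
- have [j j_end s'j] := nfree_gt0 ends_gt0.
  exists j, 1; split; first exact: legal_move_neq0 s'j (oner_neq0 _).
  split.
  + exact: nfree_play_all s'j s'_free.
  + by move: s'_ends; rewrite (nfree_play _ 1 s'j) j_end; lia.
  + by move=> k0; move: ends_gt0 s'_ends; rewrite k0; lia.
Qed.

End WandaStrategy.

Section NoraStrategy.
Variable d : nat.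
Hypothesis d_gt3 : (3 < d)%N.
Implicit Types (s t : position d).

Lemma low_le_d k : (k < 4)%N -> (k <= d)%N.
Proof. lia. Qed.

Lemma inord_low_eq m n :
  (m < 4)%N -> (n < 4)%N -> (inord m == inord n :> 'I_d.+1) = (m == n).
Proof. by move=> m_lt4 n_lt4; rewrite -val_eqE /= !inordK // ltnS low_le_d. Qed.

Lemma is_end_inord0 : is_end (inord 0 : 'I_d.+1).
Proof. by rewrite /is_end inordK. Qed.

Lemma inner_inord_low k : (0 < k < 4)%N -> ~~ is_end (inord k : 'I_d.+1).
Proof.
case/andP=> k_gt0 k_lt4; rewrite /is_end inordK ?ltnS ?low_le_d //.
by apply/norP; split; apply/eqP; lia.
Qed.

Lemma even_roots_blocked_odd_coef0 s a0 :
  s (inord 0) = Some a0 -> odd16 a0 -> even_roots_blocked s.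
Proof.
move=> s0 a0_odd t st x x_even; apply/negP => /eqP fx0.
have := odd16_horner_even (poly_of t) x_even.
by rewrite fx0 coef_poly_of // (st _ _ s0) /= a0_odd.
Qed.

Lemma even_roots_blocked_coef1_eq0 s a0 a2 :
  s (inord 0) = Some a0 -> a0 != 0 -> s (inord 1) = Some 0 -> s (inord 2) = Some a2 ->
  (forall t, extends s t -> a0 + 4 * a2 + 8 * odflt 0 (t (inord 3)) != 0) ->
  even_roots_blocked s.
Proof.
move=> s0 a0_neq0 s1 s2 s3 t st x x_even.
have t1 : (poly_of t)`_1 = 0 by rewrite coef_poly_of ?low_le_d // (st _ _ s1).
rewrite /root; case: (horner_even_coef1_eq0_Z16 x_even t1) => ->;
  rewrite !coef_poly_of ?low_le_d // (st _ _ s0) ?(st _ _ s2) //; exact: s3.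
Qed.

Definition opening s : Prop :=
  [/\ s (inord 0) = None, s (inord 1) = None, s (inord 2) = None & s (inord 3) = None].

Definition middle s : Prop := exists2 a0, a0 != 0 &
  [/\ s (inord 0) = Some a0, s (inord 1) = Some 0, s (inord 2) = None & s (inord 3) = None].

Definition nora_inv k s : Prop := nfree predT s = k.*2 /\
  [\/ even_roots_blocked s /\ (k = 0%N -> odd16 (poly_of s).[1]),
      (3 <= k)%N /\ opening s
    | (2 <= k)%N /\ middle s].

Lemma nora_inv_outcome s : nora_inv 0 s -> outcome Nora s.
Proof.
by case=> _ [[s_blocked /(_ erefl)] | [] | []] //; apply: no_root_of_even_roots_blocked.
Qed.

Lemma nora_reply_blocked k s : even_roots_blocked s -> nfree predT s = k.*2.+1 ->
  moves_into nora_inv k s.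
Proof.
move=> s_blocked s_free.
have [j _ sj] : exists2 j, predT j & s j = None by apply: nfree_gt0; rewrite s_free.
pose w : R16 := if odd16 (poly_of s).[1] then 2 else 1.
exists j, w; split; first by apply: legal_move_neq0 sj _; rewrite /w; case: ifP.
split; first exact: nfree_play_all sj s_free.
apply: Or31; split; first exact: even_roots_blocked_play.
by move=> _; rewrite horner1_play // odd16D /w; case: odd16.
Qed.

Lemma nora_reply_opening k s i v : (2 <= k)%N -> opening s -> legal_move s i v ->
  nfree predT (play_move s i v) = k.*2.+1 -> moves_into nora_inv k (play_move s i v).
Proof.
move=> k_ge2 [s0 s1 s2 s3] siv s'_free; set s' := play_move s i v.
have [i0 | i_neq0] := eqVneq i (inord 0).
- have v_neq0 : v != 0 by apply: legal_move_end siv _; rewrite i0 is_end_inord0.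
  have s'1 : s' (inord 1) = None by rewrite play_move_other // i0 inord_low_eq.
  exists (inord 1), 0; split; first exact: legal_move_inner s'1 (inner_inord_low _).
  split; first exact: nfree_play_all s'1 s'_free.
  apply: Or33; split => //; exists v => //; rewrite /s' i0.
  by split; rewrite !ffunE !inord_low_eq.
- have s'0 : s' (inord 0) = None by rewrite play_move_other // eq_sym.
  exists (inord 0), 1; split; first exact: legal_move_neq0 s'0 (oner_neq0 _).
  split; first exact: nfree_play_all s'0 s'_free.
  apply: Or31; split; first exact: even_roots_blocked_odd_coef0 (play_move_same _ _ _) _.
  by move=> k0; rewrite k0 in k_ge2.
Qed.

Lemma nora_reply_middle k s i v : (1 <= k)%N -> middle s -> legal_move s i v ->
  nfree predT (play_move s i v) = k.*2.+1 -> moves_into nora_inv k (play_move s i v).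
Proof.
move=> k_ge1 [a0 a0_neq0 [s0 s1 s2 s3]] siv s'_free; set s' := play_move s i v.
have si := legal_move_free siv.
have i_neq0 : inord 0 != i by apply/eqP => i0; rewrite -i0 s0 in si.
have i_neq1 : inord 1 != i by apply/eqP => i1; rewrite -i1 s1 in si.
have [i2 | i_neq2] := eqVneq i (inord 2).
- pose w : R16 := (a0 + 4 * v == 0)%:R.
  have s'3 : s' (inord 3) = None by rewrite play_move_other // i2 inord_low_eq.
  exists (inord 3), w; split; first exact: legal_move_inner s'3 (inner_inord_low _).
  split; first exact: nfree_play_all s'3 s'_free.
  apply: Or31; split; last by move=> k0; rewrite k0 in k_ge1.
  apply: (@even_roots_blocked_coef1_eq0 _ a0 v) => //.
  + by rewrite !play_move_other ?inord_low_eq.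
  + by rewrite !play_move_other ?inord_low_eq.
  + by rewrite play_move_other ?inord_low_eq // /s' i2 play_move_same.
  + by move=> t /(_ (inord 3) w (play_move_same _ _ _)) ->; apply: addr_mul8_neq0_Z16.
- pose w : R16 := (a0 == 8)%:R.
  have s'2 : s' (inord 2) = None by rewrite play_move_other // eq_sym.
  exists (inord 2), w; split; first exact: legal_move_inner s'2 (inner_inord_low _).
  split; first exact: nfree_play_all s'2 s'_free.
  apply: Or31; split; last by move=> k0; rewrite k0 in k_ge1.
  apply: (@even_roots_blocked_coef1_eq0 _ a0 w) => //.
  + by rewrite !play_move_other ?inord_low_eq.
  + by rewrite !play_move_other ?inord_low_eq.
  + exact: play_move_same.
  + by move=> t _; apply: mul4_mul8_neq0_Z16.
Qed.

Lemma nora_reply k s i v : nora_inv k.+1 s -> legal_move s i v ->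
  moves_into nora_inv k (play_move s i v).
Proof.
case=> s_free s_state siv; have si := legal_move_free siv.
have s'_free : nfree predT (play_move s i v) = k.*2.+1.
  by apply: nfree_play_all si _; rewrite s_free doubleS.
case: s_state => [[s_blocked _] | [k_ge2 s_open] | [k_ge1 s_mid]].
- exact: nora_reply_blocked (even_roots_blocked_play si s_blocked) s'_free.
- exact: nora_reply_opening s_open siv s'_free.
- exact: nora_reply_middle s_mid siv s'_free.
Qed.

End NoraStrategy.

Theorem lemma10 (d : nat) (hd : (3 < d)%N) (hodd : odd d) (first : player) :
  has_winning_strategy d (last_mover d first) first.
Proof.
set k := d.+1./2.
have d1_double : d.+1 = k.*2 by rewrite -[LHS]odd_double_half /= hodd.
have k_ge3 : (3 <= k)%N.
  have d_neq4 : d != 4%N by apply: contraTneq hodd => ->.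
  lia.
have last_other : last_mover d first = other first by rewrite /last_mover /= hodd.
rewrite /has_winning_strategy last_other {last_other}.
case: first.
- have init : wanda_inv k (empty_position d).
    split; first by rewrite nfree_empty card_ord.
      by rewrite nfree_empty (leq_trans (card_is_end d)) //; lia.
    by move=> k0; rewrite k0 in k_ge3.
  by have := wins_second_player (@wanda_inv_outcome d) (@wanda_reply d) init; rewrite -d1_double.
- have init : nora_inv k (empty_position d).
    split; first by rewrite nfree_empty card_ord.
    by apply: Or32; split => //; split; rewrite ffunE.
  by have := wins_second_player (@nora_inv_outcome d) (nora_reply hd) init; rewrite -d1_double.
Qed.
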